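(* For all $x^0\in\mathcal{F}(\mathcal{T},\mathbb{R})$ and $x^\uparrow,x^\downarrow\in\mathcal{F}(\mathcal{T},\mathbb{R}_+)$, the following equivalences hold. (i) $x(x^0(t),x^\uparrow(t),x^\downarrow(t),\xi(t))\le\bar x$ for all $\xi\in\Xi$ and all $t\in\mathcal{T}$ if and only if $x^0_k+x^\uparrow_k\le\bar x$ for all $k\in\mathcal{K}$. (ii) $x(x^0(t),x^\uparrow(t),x^\downarrow(t),\xi(t))\ge\underline{x}$ for all $\xi\in\Xi$ and all $t\in\mathcal{T}$ if and only if $x^0_k-x^\downarrow_k\ge\underline{x}$ for all $k\in\mathcal{K}$.
   Context: Fix a positive integer $K$, $\Delta t>0$, $T=K\Delta t$, $\mathcal{T}=[0,T]$ and $\mathcal{K}=\{1,\dots,K\}$. Let $\mathcal{T}_k=[(k-1)\Delta t,k\Delta t)$ for $k<K$ and $\mathcal{T}_K=[T-\Delta t,T]$. For $U\subseteq\mathbb{R}$, $\mathcal{F}(\mathcal{T},U)$ is the set of functions $\mathcal{T}\to U$ that are constant on each $\mathcal{T}_k$, and $\mathcal{R}(\mathcal{T},U)$ is the set of Riemann integrable functions $\mathcal{T}\to U$. For $f\in\mathcal{F}(\mathcal{T},U)$, $f_k$ denotes the value of $f$ on $\mathcal{T}_k$. Write $[z]^+=\max\{z,0\}$ and $[z]^-=\max\{-z,0\}$. Let $\underline{x}\le 0\le\bar x$ and $\gamma\in[0,T]$. The power output is $x(a,b,c,s)=a+[s]^+b-[s]^-c$. The uncertainty set is $\Xi=\{\xi\in\mathcal{R}(\mathcal{T},[-1,1]):\int_{\mathcal{T}}|\xi(t)|\,dt\le\gamma\}$.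 *)

From Stdlib Require Import Reals.
From Coquelicot Require Import Coquelicot.
Open Scope R_scope.

Definition pos_part (z : R) : R := Rmax z 0.
Definition neg_part (z : R) : R := Rmax (- z) 0.

Definition power_output (a b c s : R) : R :=
  a + pos_part s * b - neg_part s * c.

Definition in_period (K : nat) (dt : R) (k : nat) (t : R) : Prop :=
  if (k <? K)%nat
  then INR (k - 1) * dt <= t < INR k * dt
  else INR K * dt - dt <= t <= INR K * dt.

(* f in F(T,U): f maps T = [0, K dt] into U and is constant on each T_k *)
Definition piecewise_const (K : nat) (dt : R) (U : R -> Prop) (f : R -> R) : Prop :=
  (forall t, 0 <= t <= INR K * dt -> U (f t)) /\
  (forall k, (1 <= k <= K)%nat ->
     forall s t, in_period K dt k s -> in_period K dt k t -> f s = f t).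

(* f_k : value of f on T_k (its left endpoint (k-1) dt lies in T_k) *)
Definition val_k (dt : R) (f : R -> R) (k : nat) : R := f (INR (k - 1) * dt).

Definition in_Xi (T gamma : R) (xi : R -> R) : Prop :=
  (forall t, 0 <= t <= T -> -1 <= xi t <= 1) /\
  ex_RInt xi 0 T /\
  RInt (fun t => Rabs (xi t)) 0 T <= gamma.

(* The worst case is attained by an uncertainty trajectory that equals +1 (or -1) at a
   single instant and 0 elsewhere: it is Riemann integrable with integral 0, hence lies in
   Xi for every gamma >= 0, and at that instant the output is x^0 + x^up (or x^0 - x^down).
   Conversely, |xi| <= 1 and the nonnegativity of x^up, x^down bound the output by these
   values at every t, and these are the period values x^0_k + x^up_k (x^0_k - x^down_k). *)
From Stdlib Require Import Reals Lra Lia.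
From Coquelicot Require Import Coquelicot.
Open Scope R_scope.

Lemma is_RInt_zero (a b : R) : is_RInt (fun _ => 0) a b 0.
Proof.
  pose proof (is_RInt_const a b 0) as Hconst.
  match type of Hconst with is_RInt _ _ _ ?v =>
    replace v with 0 in Hconst by (unfold scal; simpl; unfold mult; simpl; ring) end.
  exact Hconst.
Qed.

Lemma is_RInt_point_supported (f : R -> R) (t0 a b : R) :
  a <= t0 <= b -> (forall t, t <> t0 -> f t = 0) -> is_RInt f a b 0.
Proof.
  intros Ht Hf.
  (* [is_RInt_ext] only asks for agreement on the open interval, which misses t0. *)
  assert (Hleft : is_RInt f a t0 0).
  { apply (is_RInt_ext (fun _ => 0)); [|apply is_RInt_zero].
    intros x Hx; rewrite Hf; [reflexivity|].
    rewrite Rmin_left, Rmax_right in Hx; lra. }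
  assert (Hright : is_RInt f t0 b 0).
  { apply (is_RInt_ext (fun _ => 0)); [|apply is_RInt_zero].
    intros x Hx; rewrite Hf; [reflexivity|].
    rewrite Rmin_left, Rmax_right in Hx; lra. }
  pose proof (is_RInt_Chasles _ _ _ _ _ _ Hleft Hright) as Hwhole.
  match type of Hwhole with is_RInt _ _ _ ?v =>
    replace v with 0 in Hwhole by (unfold plus; simpl; ring) end.
  exact Hwhole.
Qed.

Definition spike (c t0 t : R) : R := if Req_EM_T t t0 then c else 0.

Lemma spike_at (c t0 : R) : spike c t0 t0 = c.
Proof. unfold spike; destruct (Req_EM_T t0 t0); congruence. Qed.

Lemma spike_in_Xi (c t0 T gamma : R) :
  -1 <= c <= 1 -> 0 <= gamma -> 0 <= t0 <= T -> in_Xi T gamma (spike c t0).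
Proof.
  intros Hc Hgamma Ht.
  assert (Hoff : forall g : R -> R, g 0 = 0 ->
            forall t, t <> t0 -> g (spike c t0 t) = 0).
  { intros g Hg t Hne; unfold spike; destruct (Req_EM_T t t0); congruence. }
  split; [|split].
  - intros t _; unfold spike; destruct (Req_EM_T t t0); lra.
  - exists 0; exact (is_RInt_point_supported _ t0 _ _ Ht (Hoff id eq_refl)).
  - rewrite (is_RInt_unique _ _ _ 0); [lra|].
    exact (is_RInt_point_supported _ t0 _ _ Ht (Hoff Rabs Rabs_R0)).
Qed.

Lemma power_output_1 (a b c : R) : power_output a b c 1 = a + b.
Proof.
  unfold power_output, pos_part, neg_part.
  rewrite Rmax_left, Rmax_right; lra.
Qed.

Lemma power_output_N1 (a b c : R) : power_output a b c (-1) = a - c.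
Proof.
  unfold power_output, pos_part, neg_part.
  rewrite Rmax_right, Rmax_left; lra.
Qed.

Lemma pos_part_bounds (s : R) : s <= 1 -> 0 <= pos_part s <= 1.
Proof. unfold pos_part; split; [apply Rmax_r | apply Rmax_lub; lra]. Qed.

Lemma neg_part_bounds (s : R) : -1 <= s -> 0 <= neg_part s <= 1.
Proof. unfold neg_part; split; [apply Rmax_r | apply Rmax_lub; lra]. Qed.

Lemma power_output_le (a b c s : R) :
  -1 <= s <= 1 -> 0 <= b -> 0 <= c -> power_output a b c s <= a + b.
Proof.
  intros Hs Hb Hc; unfold power_output.
  pose proof (pos_part_bounds s ltac:(lra)).
  pose proof (neg_part_bounds s ltac:(lra)).
  nra.
Qed.

Lemma power_output_ge (a b c s : R) :
  -1 <= s <= 1 -> 0 <= b -> 0 <= c -> power_output a b c s >= a - c.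
Proof.
  intros Hs Hb Hc; unfold power_output.
  pose proof (pos_part_bounds s ltac:(lra)).
  pose proof (neg_part_bounds s ltac:(lra)).
  nra.
Qed.

Section Periods.

Variables (K : nat) (dt : R).
Hypothesis Hdt : 0 < dt.

Lemma exists_half_open_period (n : nat) (t : R) :
  0 <= t < INR n * dt ->
  exists k, (1 <= k <= n)%nat /\ INR (k - 1) * dt <= t < INR k * dt.
Proof.
  induction n as [|n IH]; intros Ht; [simpl in Ht; lra|].
  destruct (Rlt_dec t (INR n * dt)) as [Hlt|Hge].
  - destruct (IH ltac:(lra)) as [k [Hk Hkt]].
    exists k; split; [lia | exact Hkt].
  - exists (S n); split; [lia|].
    replace (S n - 1)%nat with n by lia; lra.
Qed.

Lemma exists_period (t : R) :
  (0 < K)%nat -> 0 <= t <= INR K * dt ->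
  exists k, (1 <= k <= K)%nat /\ in_period K dt k t.
Proof.
  intros HK Ht; unfold in_period.
  destruct (Rlt_dec t (INR K * dt)) as [Hlt|Hge].
  - destruct (exists_half_open_period K t ltac:(lra)) as [k [Hk Hkt]].
    exists k; split; [exact Hk|].
    destruct (Nat.ltb_spec k K); [exact Hkt|].
    replace k with K in Hkt by lia.
    rewrite minus_INR in Hkt by lia; simpl in Hkt; lra.
  - exists K; split; [lia|].
    rewrite Nat.ltb_irrefl; lra.
Qed.

Lemma left_endpoint_in_period (k : nat) :
  (1 <= k <= K)%nat -> in_period K dt k (INR (k - 1) * dt).
Proof.
  intros Hk; unfold in_period.
  destruct (Nat.ltb_spec k K).
  - split; [lra|].
    apply Rmult_lt_compat_r; [exact Hdt|]; apply lt_INR; lia.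
  - replace k with K by lia.
    rewrite minus_INR by lia; simpl; lra.
Qed.

Lemma left_endpoint_in_horizon (k : nat) :
  (1 <= k <= K)%nat -> 0 <= INR (k - 1) * dt <= INR K * dt.
Proof.
  intros Hk; split.
  - apply Rmult_le_pos; [apply pos_INR | lra].
  - apply Rmult_le_compat_r; [lra|]; apply le_INR; lia.
Qed.

Lemma piecewise_const_val_k (U : R -> Prop) (f : R -> R) (k : nat) (t : R) :
  piecewise_const K dt U f -> (1 <= k <= K)%nat -> in_period K dt k t ->
  f t = val_k dt f k.
Proof.
  intros [_ Hconst] Hk Ht.
  exact (Hconst k Hk _ _ Ht (left_endpoint_in_period k Hk)).
Qed.

End Periods.

Section RobustBounds.

Variables (K : nat) (dt gamma bound : R) (x0 xu xd : R -> R).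
Hypotheses (HK : (0 < K)%nat) (Hdt : 0 < dt) (Hgamma : 0 <= gamma).
Hypotheses (Hx0 : piecewise_const K dt (fun _ => True) x0)
           (Hxu : piecewise_const K dt (fun v => 0 <= v) xu)
           (Hxd : piecewise_const K dt (fun v => 0 <= v) xd).

Lemma robust_upper_bound_iff :
  (forall xi, in_Xi (INR K * dt) gamma xi ->
     forall t, 0 <= t <= INR K * dt ->
       power_output (x0 t) (xu t) (xd t) (xi t) <= bound)
  <-> (forall k, (1 <= k <= K)%nat -> val_k dt x0 k + val_k dt xu k <= bound).
Proof.
  split.
  - intros Hrobust k Hk.
    pose proof (left_endpoint_in_horizon K dt Hdt k Hk) as Hleft.
    pose proof (Hrobust _ (spike_in_Xi 1 _ _ _ ltac:(lra) Hgamma Hleft) _ Hleft)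
      as Hworst.
    rewrite spike_at, power_output_1 in Hworst; exact Hworst.
  - intros Hperiods xi [Hxi _] t Ht.
    destruct (exists_period K dt Hdt t HK Ht) as [k [Hk Hkt]].
    pose proof (power_output_le (x0 t) _ _ _ (Hxi t Ht) (proj1 Hxu t Ht) (proj1 Hxd t Ht)).
    rewrite (piecewise_const_val_k K dt Hdt _ _ k t Hx0 Hk Hkt) in *.
    rewrite (piecewise_const_val_k K dt Hdt _ _ k t Hxu Hk Hkt) in *.
    pose proof (Hperiods k Hk); lra.
Qed.

Lemma robust_lower_bound_iff :
  (forall xi, in_Xi (INR K * dt) gamma xi ->
     forall t, 0 <= t <= INR K * dt ->
       power_output (x0 t) (xu t) (xd t) (xi t) >= bound)
  <-> (forall k, (1 <= k <= K)%nat -> val_k dt x0 k - val_k dt xd k >= bound).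
Proof.
  split.
  - intros Hrobust k Hk.
    pose proof (left_endpoint_in_horizon K dt Hdt k Hk) as Hleft.
    pose proof (Hrobust _ (spike_in_Xi (-1) _ _ _ ltac:(lra) Hgamma Hleft) _ Hleft)
      as Hworst.
    rewrite spike_at, power_output_N1 in Hworst; exact Hworst.
  - intros Hperiods xi [Hxi _] t Ht.
    destruct (exists_period K dt Hdt t HK Ht) as [k [Hk Hkt]].
    pose proof (power_output_ge (x0 t) _ _ _ (Hxi t Ht) (proj1 Hxu t Ht) (proj1 Hxd t Ht)).
    rewrite (piecewise_const_val_k K dt Hdt _ _ k t Hx0 Hk Hkt) in *.
    rewrite (piecewise_const_val_k K dt Hdt _ _ k t Hxd Hk Hkt) in *.
    pose proof (Hperiods k Hk); lra.
Qed.

End RobustBounds.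

Theorem proposition5 (K : nat) (dt x_lo x_hi gamma : R)
  (HK : (0 < K)%nat) (Hdt : 0 < dt)
  (Hlo : x_lo <= 0) (Hhi : 0 <= x_hi)
  (Hgamma : 0 <= gamma <= INR K * dt)
  (x0 xu xd : R -> R)
  (Hx0 : piecewise_const K dt (fun _ => True) x0)
  (Hxu : piecewise_const K dt (fun v => 0 <= v) xu)
  (Hxd : piecewise_const K dt (fun v => 0 <= v) xd) :
  ((forall xi, in_Xi (INR K * dt) gamma xi ->
      forall t, 0 <= t <= INR K * dt ->
        power_output (x0 t) (xu t) (xd t) (xi t) <= x_hi)
   <-> (forall k, (1 <= k <= K)%nat -> val_k dt x0 k + val_k dt xu k <= x_hi))
  /\
  ((forall xi, in_Xi (INR K * dt) gamma xi ->
      forall t, 0 <= t <= INR K * dt ->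
        power_output (x0 t) (xu t) (xd t) (xi t) >= x_lo)
   <-> (forall k, (1 <= k <= K)%nat -> val_k dt x0 k - val_k dt xd k >= x_lo)).
Proof.
  split.
  - exact (robust_upper_bound_iff K dt gamma x_hi x0 xu xd HK Hdt (proj1 Hgamma) Hx0 Hxu Hxd).
  - exact (robust_lower_bound_iff K dt gamma x_lo x0 xu xd HK Hdt (proj1 Hgamma) Hx0 Hxu Hxd).
Qed.
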